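(* Let $g\ge1$, $n=g+1$, $k\in\{1,\dots,g\}$, $I_k=\{1,\dots,k\}$, $\kappa_1,\dots,\kappa_n\in\mathbb C$ pairwise distinct, $\beta_1,\dots,\beta_g,\lambda_1,\dots,\lambda_g\in\mathbb C^*$, $\beta_0=\lambda_0=1$. Let $A$ be the $k\times n$ matrix with $A_{ij}=\delta_{ij}$ for $j\le k$ and $A_{ij}=\frac{\beta_{i-1}}{\beta_{j-1}(\kappa_j-\kappa_i)^2}\prod_{l\in I_k,l\ne i}\frac{\kappa_i-\kappa_l}{\kappa_j-\kappa_l}$ for $i\le k<j$, and let $\tilde A=V\cdot\mathrm{diag}(1,\lambda_1,\dots,\lambda_g)$ with $V_{ij}=\kappa_j^{i-1}$. Then $A$ and $\tilde A$ have the same row space (represent the same point of $\mathrm{Gr}(k,n)$) if and only if for all $j\in[g]$ $$\beta_j=\lambda_j^{-1}\,\exp\Big[\tfrac k2R_{jj}-\sum_{l=1}^{k-1}R_{jl}\Big].$$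
   Context: $R$ is the $g\times g$ symmetric matrix with $R_{ii}=-2\log(\kappa_{i+1}-\kappa_1)^2$ and $R_{ij}=\log\frac{(\kappa_{i+1}-\kappa_{j+1})^2}{(\kappa_{i+1}-\kappa_1)^2(\kappa_{j+1}-\kappa_1)^2}$ for $i\ne j$ (the limit period matrix of the degenerating hyperelliptic curves $y^2=\prod_i(x-\kappa_i-\varepsilon)(x-\kappa_i+\varepsilon)$); the right-hand side is independent of the branch of $\log$, e.g. $\exp[\tfrac12R_{jj}]=(\kappa_{j+1}-\kappa_1)^{-2}$. *)

(* complex numbers C = R[i] over R : realType
   (any realType is a complete archimedean ordered field, i.e. the reals). *)
From HB Require Import structures.
From mathcomp Require Import all_boot all_order all_algebra.
From mathcomp Require Import reals complex.
Set Implicit Arguments. Unset Strict Implicit. Unset Printing Implicit Defensive.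
Import Order.TTheory GRing.Theory Num.Theory.
Local Open Scope ring_scope.

(* Indexing convention: everything is 0-based.
   paper kappa_j (j = 1..n, n = g+1)      ~ kappa (j-1)   with kappa : 'I_(g.+1) -> C
   paper beta_j, lambda_j (j = 0..g)      ~ beta j, lambda j  (beta 0 = lambda 0 = 1)
   paper row i (1..k), column j (1..n)    ~ i-1 : 'I_k, j-1 : 'I_(g.+1)
   paper R_{jl} (j,l = 1..g, involving kappa_{j+1}, kappa_{l+1}, kappa_1)
                                          ~ indices j, l : 'I_(g.+1) with j, l <> 0,
                                            involving kappa j, kappa l, kappa 0. *)

Section Defs.
Variables (R : realType) (g k : nat).
Local Notation C := (R[i]).
Variables (kappa beta lambda : 'I_g.+1 -> C).

(* The k x n matrix A (for i : 'I_k, the paper's index i-1 as an element of 'I_(g.+1)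
   is inord i, which has value i since k <= g). *)
Definition matA : 'M[C]_(k, g.+1) :=
  \matrix_(i < k, j < g.+1)
    if (j < k)%N then (i == j :> nat)%:R
    else beta (inord i) / (beta j * (kappa j - kappa (inord i)) ^+ 2) *
         \prod_(l < g.+1 | (l < k)%N && (l != i :> nat))
            ((kappa (inord i) - kappa l) / (kappa j - kappa l)).

Definition matV : 'M[C]_(k, g.+1) := \matrix_(i < k, j < g.+1) kappa j ^+ i.

Definition matAt : 'M[C]_(k, g.+1) := matV *m diag_mx (\row_(j < g.+1) lambda j).

(* exp[R_{jl}/2] on the diagonal: exp[R_jj / 2] = (kappa_{j+1} - kappa_1)^(-2). *)
Definition expR_half_diag (j : 'I_g.+1) : C := ((kappa j - kappa 0) ^+ 2)^-1.

(* exp[R_{jl}] : branch-independent value of exp of the limit period matrix entry. *)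
Definition expRmat (j l : 'I_g.+1) : C :=
  if j == l then ((kappa j - kappa 0) ^+ 2)^-2
  else (kappa j - kappa l) ^+ 2 /
       ((kappa j - kappa 0) ^+ 2 * (kappa l - kappa 0) ^+ 2).

(* exp[ (k/2) R_jj - sum_{l=1}^{k-1} R_jl ]
   = (exp[R_jj/2])^k * prod_{l=1}^{k-1} (exp[R_jl])^(-1). *)
Definition expRcomb (j : 'I_g.+1) : C :=
  expR_half_diag j ^+ k *
  \prod_(l < g.+1 | (0 < l < k)%N) (expRmat j l)^-1.
End Defs.

From HB Require Import structures.
From mathcomp Require Import all_boot all_order all_algebra.
From mathcomp Require Import reals complex.
From mathcomp Require Import ring.
Set Implicit Arguments. Unset Strict Implicit. Unset Printing Implicit Defensive.
Import Order.TTheory GRing.Theory Num.Theory.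
Local Open Scope ring_scope.

(* The first k columns of A form the identity matrix, so A and Ã have the
   same row space iff Ã = M A, where M, the block of the first k columns of Ã,
   is an invertible scaled Vandermonde matrix.  Column x > k of Ã = M A is a
   Vandermonde system in the nodes κ_1, ..., κ_k, solved by the Lagrange basis
   evaluated at κ_x; unfolding A, it says that
     w_x = λ_(x-1) β_(x-1) ∏_(l ≤ k, l ≠ x) (κ_x - κ_l)^2
   takes the same value at every column x ≤ k and every column x > k, i.e. that
   w is constant.  Finally exp[(k/2) R_jj - Σ_(l<k) R_jl] equals
   w_1 / ∏_(l ≤ k, l ≠ j+1) (κ_(j+1) - κ_l)^2, so w_(j+1) = w_1 is exactly the
   stated formula for β_j. *)

Lemma eqmx_colsub_id (F : fieldType) (m n : nat) (f : 'I_m -> 'I_n)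
    (A B : 'M[F]_(m, n)) :
  colsub f A = 1%:M -> colsub f B \in unitmx ->
  (A == B)%MS = (B == colsub f B *m A).
Proof.
move=> idA unitB; rewrite andbC.
apply/idP/eqP => [/eqmxMunitP [P _ defB] | defB]; last first.
  by apply/eqmxMunitP; exists (colsub f B).
by rewrite {2}defB -mulmx_colsub idA mulmx1.
Qed.

Section VandermondeSystem.
Variables (F : fieldType) (n : nat) (x : 'I_n -> F).

Definition nodal_except (a : 'I_n) (y : F) : F := \prod_(l | l != a) (y - x l).

Definition lagrange_at (a : 'I_n) (y : F) : F :=
  nodal_except a y / nodal_except a (x a).

Lemma moments_horner (c : 'I_n -> F) (s y : F) :
    (forall i : 'I_n, \sum_a x a ^+ i * c a = s * y ^+ i) ->
  forall p : {poly F}, (size p <= n)%N -> \sum_a c a * p.[x a] = s * p.[y].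
Proof.
move=> moments p sp; under eq_bigr do rewrite (horner_coef_wide _ sp) mulr_sumr.
rewrite (horner_coef_wide _ sp) mulr_sumr exchange_big /=.
apply: eq_bigr => i _; rewrite mulrCA -moments mulr_sumr.
by apply: eq_bigr => a _; rewrite mulrCA (mulrC (c a)).
Qed.

Hypothesis x_inj : injective x.

Lemma nodal_except_node_neq0 (a : 'I_n) : nodal_except a (x a) != 0.
Proof. by apply/prodf_neq0 => l la; rewrite subr_eq0 (inj_eq x_inj) eq_sym. Qed.

Lemma moments_lagrange (c : 'I_n -> F) (s y : F) :
    (forall i : 'I_n, \sum_a x a ^+ i * c a = s * y ^+ i) ->
  forall a, c a = s * lagrange_at a y.
Proof.
move=> moments b; pose p := \prod_(l | l != b) ('X - (x l)%:P).
have p_nodal z : p.[z] = nodal_except b z.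
  by rewrite horner_prod; apply: eq_bigr => l _; rewrite hornerXsubC.
have size_p : (size p <= n)%N.
  rewrite /p -big_filter size_prod_XsubC size_filter.
  have := cardC1 b; rewrite card_ord cardE /enum_mem size_filter => ->.
  by rewrite ltn_predL (leq_ltn_trans _ (ltn_ord b)).
have := moments_horner moments size_p; rewrite (bigD1 b) //= big1 ?addr0.
  by rewrite !p_nodal mulrA => <-; rewrite mulfK ?nodal_except_node_neq0.
by move=> a ab; rewrite p_nodal /nodal_except (bigD1 a) //= subrr mul0r mulr0.
Qed.

Lemma Vandermonde_unit : Vandermonde n (\row_a x a) \in unitmx.
Proof.
rewrite unitmxE det_Vandermonde unitfE; apply/prodf_neq0 => a _.
apply/prodf_neq0 => b ab; rewrite !mxE subr_eq0 (inj_eq x_inj).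
by rewrite neq_ltn ab orbT.
Qed.

Lemma moments_lagrangeP (c : 'I_n -> F) (s y : F) :
  (forall i : 'I_n, \sum_a x a ^+ i * c a = s * y ^+ i) <->
  (forall a, c a = s * lagrange_at a y).
Proof.
split; first exact: moments_lagrange.
pose V := Vandermonde n (\row_a x a).
pose sol := invmx V *m \col_(i < n) (s * y ^+ i).
have sol_moments (i : 'I_n) : \sum_a x a ^+ i * sol a 0 = s * y ^+ i.
  have /matrixP /(_ i 0) := mulKVmx Vandermonde_unit (\col_(i < n) (s * y ^+ i)).
  by rewrite !mxE => <-; apply: eq_bigr => a _; rewrite !mxE.
move=> c_lagrange i; rewrite -sol_moments; apply: eq_bigr => a _.
by rewrite c_lagrange (moments_lagrange sol_moments).
Qed.

End VandermondeSystem.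

Lemma forall_widen_ord (m n : nat) (le_mn : (m <= n)%N) (P : pred 'I_n) :
  [forall a : 'I_m, P (widen_ord le_mn a)] = [forall i : 'I_n, (i < m)%N ==> P i].
Proof.
apply/forallP/forallP => [Pw i | Pi a]; last first.
  by have /implyP := Pi (widen_ord le_mn a); apply; rewrite /= ltn_ord.
apply/implyP => lt_im; have -> : i = widen_ord le_mn (Ordinal lt_im).
  exact: val_inj.
exact: Pw.
Qed.

Lemma forall_cross_eq (I : finType) (T : eqType) (P : pred I) (e : I -> T)
    (i0 j0 : I) : P i0 -> ~~ P j0 ->
  [forall j, ~~ P j ==> [forall i, P i ==> (e i == e j)]] =
  [forall j, e j == e i0].
Proof.
move=> Pi0 Pj0; apply/forallP/forallP => [cross j | const j]; last first.
  apply/implyP => _; apply/forallP => i; apply/implyP => _.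
  by rewrite (eqP (const i)) (eqP (const j)).
have cross_eq i j' : P i -> ~~ P j' -> e i = e j'.
  by move=> Pi Pj'; have /implyP/(_ Pj')/forallP/(_ i)/implyP/(_ Pi)/eqP := cross j'.
case: (boolP (P j)) => Pj; last by rewrite -(cross_eq i0 j).
by rewrite (cross_eq j j0) // (cross_eq i0 j0).
Qed.

Section Proposition5p7.
Variables (R : realType) (g k : nat).
Local Notation C := R[i].
Variables (kappa beta lambda : 'I_g.+1 -> C).
Hypotheses (k_le_g : (k <= g)%N) (kappa_inj : injective kappa).
Hypotheses (beta_neq0 : forall j, beta j != 0) (lambda_neq0 : forall j, lambda j != 0).

Local Notation w := (widen_ord (leqW k_le_g)).
Let node (a : 'I_k) : C := kappa (w a).

Lemma node_inj : injective node.
Proof. by move=> a b /kappa_inj /(congr1 val) /= /val_inj. Qed.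

Lemma kappa_sub_neq0 (x y : 'I_g.+1) : x != y -> kappa x - kappa y != 0.
Proof. by rewrite subr_eq0 (inj_eq kappa_inj). Qed.

Lemma matA_colsub : colsub w (matA k kappa beta) = 1%:M.
Proof. by apply/matrixP => i a; rewrite !mxE /= ltn_ord. Qed.

Lemma matAt_entry i j : matAt k kappa lambda i j = lambda j * kappa j ^+ i.
Proof. by rewrite /matAt mul_mx_diag !mxE mulrC. Qed.

Lemma matAt_colsub : colsub w (matAt k kappa lambda) =
  Vandermonde k (\row_a node a) *m diag_mx (\row_a lambda (w a)).
Proof. by apply/matrixP => i a; rewrite mul_mx_diag [LHS]mxE matAt_entry !mxE mulrC. Qed.

Lemma matAt_colsub_unit : colsub w (matAt k kappa lambda) \in unitmx.
Proof.
rewrite matAt_colsub unitmx_mul (Vandermonde_unit node_inj) unitmxE det_diag.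
by rewrite unitfE; apply/prodf_neq0 => a _; rewrite mxE.
Qed.

Lemma matA_right_block (a : 'I_k) (j : 'I_g.+1) : ~~ (j < k)%N ->
  matA k kappa beta a j =
  beta (w a) / (beta j * (kappa j - node a) ^+ 2) / lagrange_at node a (kappa j).
Proof.
have inord_a : inord a = w a.
  by apply: val_inj; rewrite /= inordK // (leq_trans (ltn_ord a)) // leqW.
move=> ge_jk; rewrite mxE (negbTE ge_jk) inord_a /lagrange_at invf_div.
rewrite /nodal_except -prodf_div; congr (_ * _).
rewrite (eq_bigl (fun l : 'I_g.+1 => (l != a :> nat) && (l < k)%N)); last first.
  by move=> l; rewrite andbC.
by rewrite (big_ord_narrow_cond (leqW k_le_g)); apply: eq_bigl.
Qed.

Lemma matAt_eq_mul_matA :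
  (matAt k kappa lambda == colsub w (matAt k kappa lambda) *m matA k kappa beta) =
  [forall j : 'I_g.+1, ~~ (j < k)%N ==> [forall a : 'I_k,
    lambda (w a) * matA k kappa beta a j == lambda j * lagrange_at node a (kappa j)]].
Proof.
have mulMA_entry i j : (colsub w (matAt k kappa lambda) *m matA k kappa beta) i j
    = \sum_a node a ^+ i * (lambda (w a) * matA k kappa beta a j).
  by rewrite mxE; apply: eq_bigr => a _; rewrite matAt_colsub mul_mx_diag !mxE mulrA.
apply/eqP/forallP => [defAt j | cols].
  apply/implyP => _; apply/forallP => a; apply/eqP.
  apply: (moments_lagrange node_inj (c := fun a => lambda (w a) * matA k kappa beta a j)).
  by move=> i; rewrite -mulMA_entry -defAt matAt_entry.
apply/matrixP => i j; case: (ltnP j k) => [lt_jk | ge_jk].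
  have -> : j = w (Ordinal lt_jk) by apply: val_inj.
  have /matrixP/(_ i (Ordinal lt_jk)) :=
    mulmx_colsub w (colsub w (matAt k kappa lambda)) (matA k kappa beta).
  by rewrite matA_colsub mulmx1 !mxE.
rewrite matAt_entry mulMA_entry; symmetry; move: i.
apply: (moments_lagrangeP node_inj (fun a => lambda (w a) * matA k kappa beta a j) _ _).2.
have /implyP := cols j; rewrite -leqNgt => /(_ ge_jk) /forallP cols_j a.
exact/eqP.
Qed.

Definition sqdist_nodes (x : 'I_g.+1) : C :=
  \prod_(l < g.+1 | (l < k)%N && (l != x)) (kappa x - kappa l) ^+ 2.

Definition weight (x : 'I_g.+1) : C := lambda x * beta x * sqdist_nodes x.

Lemma sqdist_nodes_narrow (x : 'I_g.+1) :
  sqdist_nodes x = \prod_(l < k | w l != x) (kappa x - node l) ^+ 2.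
Proof.
rewrite /sqdist_nodes (eq_bigl (fun l => (l != x) && (l < k)%N)) => [|l].
  exact: big_ord_narrow_cond.
exact: andbC.
Qed.

Lemma sqdist_nodes_neq0 (x : 'I_g.+1) : sqdist_nodes x != 0.
Proof.
by apply/prodf_neq0 => l /andP [_ lx]; rewrite expf_neq0 // kappa_sub_neq0 // eq_sym.
Qed.

Lemma sqdist_nodes_node (a : 'I_k) :
  sqdist_nodes (w a) = nodal_except node a (node a) ^+ 2.
Proof. by rewrite sqdist_nodes_narrow /nodal_except -prodrXl; apply: eq_bigl. Qed.

Lemma widen_neq_right (l : 'I_k) (j : 'I_g.+1) : ~~ (j < k)%N -> w l != j.
Proof. by apply: contraNneq => <-; rewrite /= ltn_ord. Qed.

Lemma sqdist_nodes_right (a : 'I_k) (j : 'I_g.+1) : ~~ (j < k)%N ->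
  sqdist_nodes j = (kappa j - node a) ^+ 2 * nodal_except node a (kappa j) ^+ 2.
Proof.
move=> ge_jk; rewrite sqdist_nodes_narrow /nodal_except -prodrXl.
by rewrite [LHS](eq_bigl xpredT) => [|l]; [rewrite (bigD1 a) | rewrite widen_neq_right].
Qed.

Lemma lagrange_eq_weight (a : 'I_k) (j : 'I_g.+1) : ~~ (j < k)%N ->
  (lambda (w a) * matA k kappa beta a j == lambda j * lagrange_at node a (kappa j)) =
  (weight (w a) == weight j).
Proof.
move=> ge_jk; rewrite matA_right_block // /lagrange_at /weight.
rewrite sqdist_nodes_node (sqdist_nodes_right a ge_jk).
have p_neq0 := nodal_except_node_neq0 node_inj a.
have q_neq0 : nodal_except node a (kappa j) != 0.
  by apply/prodf_neq0 => l _; rewrite kappa_sub_neq0 // eq_sym widen_neq_right.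
have d_neq0 : kappa j - node a != 0 by rewrite kappa_sub_neq0 // eq_sym widen_neq_right.
have b_neq0 := beta_neq0 j.
set p := nodal_except node a (node a); set q := nodal_except node a (kappa j).
set d := kappa j - node a.
have z_neq0 : beta j * d ^+ 2 * q * p != 0 by rewrite !mulf_neq0 ?expf_neq0.
rewrite -(inj_eq (mulIf z_neq0)); congr (_ == _); field.
all: by rewrite ?b_neq0 ?d_neq0 ?q_neq0 ?p_neq0.
Qed.

Lemma expRcomb_factor (j : 'I_g.+1) (l : 'I_k) : j != ord0 ->
  (if (0 < l)%N then (expRmat kappa j (w l))^-1 else 1) *
  (if w l == j then 1 else (kappa j - node l) ^+ 2) =
  (kappa j - kappa ord0) ^+ 2 * (if (0 < l)%N then (node l - kappa ord0) ^+ 2 else 1).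
Proof.
move=> j0; have dj_neq0 : kappa j - kappa ord0 != 0 by rewrite kappa_sub_neq0.
case: (posnP l) => [l0 | l_gt0].
  have wl0 : w l = ord0 by apply: val_inj.
  by rewrite /node wl0 eq_sym (negbTE j0) mul1r mulr1.
have dl_neq0 : node l - kappa ord0 != 0.
  by rewrite /node kappa_sub_neq0 // -val_eqE /= -lt0n.
(* The [0 : 'I_g.+1] of the definitions is the ring zero, convertible to [ord0]. *)
rewrite /expRmat -[kappa 0]/(kappa ord0) /node.
case: (eqVneq j (w l)) => [-> | jl].
  by rewrite invrK mulr1 -expr2.
have djl_neq0 : kappa j - kappa (w l) != 0 by rewrite kappa_sub_neq0.
by field; rewrite dj_neq0 dl_neq0 djl_neq0.
Qed.

Lemma expRcomb_mul_sqdist (j : 'I_g.+1) : j != ord0 ->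
  expRcomb k kappa j * sqdist_nodes j = sqdist_nodes ord0.
Proof.
move=> j0; have d2_neq0 : (kappa j - kappa ord0) ^+ 2 != 0.
  by rewrite expf_neq0 // kappa_sub_neq0.
have expRmat_prod : \prod_(l < g.+1 | (0 < l < k)%N) (expRmat kappa j l)^-1 =
    \prod_(l < k) (if (0 < l)%N then (expRmat kappa j (w l))^-1 else 1).
  by rewrite (big_ord_narrow_cond (leqW k_le_g)) big_mkcond.
have sqdist_j : sqdist_nodes j =
    \prod_(l < k) (if w l == j then 1 else (kappa j - node l) ^+ 2).
  by rewrite sqdist_nodes_narrow big_mkcond; apply: eq_bigr => l _; rewrite if_neg.
have sqdist_0 : sqdist_nodes ord0 =
    \prod_(l < k) (if (0 < l)%N then (node l - kappa ord0) ^+ 2 else 1).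
  rewrite sqdist_nodes_narrow big_mkcond; apply: eq_bigr => l _.
  by rewrite -val_eqE /= -lt0n -sqrrN opprB.
rewrite /expRcomb /expR_half_diag expRmat_prod sqdist_j sqdist_0 -mulrA -big_split /=.
under eq_bigr do rewrite expRcomb_factor //.
by rewrite big_split /= prodr_const card_ord mulrA -exprMn mulVf // expr1n mul1r.
Qed.

Hypotheses (beta0 : beta ord0 = 1) (lambda0 : lambda ord0 = 1).

Lemma weight_eq_weight0 (j : 'I_g.+1) : j != ord0 ->
  (weight j == weight ord0) = (beta j == (lambda j)^-1 * expRcomb k kappa j).
Proof.
move=> j0; rewrite /weight beta0 lambda0 !mul1r -(expRcomb_mul_sqdist j0).
rewrite (inj_eq (mulIf (sqdist_nodes_neq0 j))).
by rewrite -[RHS](inj_eq (mulfI (lambda_neq0 j))) mulVKf.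
Qed.

End Proposition5p7.

Theorem proposition5p7 (R : realType) (g k : nat)
  (kappa beta lambda : 'I_g.+1 -> R[i])
  (hg : (1 <= g)%N) (hk1 : (1 <= k)%N) (hkg : (k <= g)%N)
  (hkappa : injective kappa)
  (hbeta0 : beta ord0 = 1) (hlambda0 : lambda ord0 = 1)
  (hbeta : forall j, beta j != 0) (hlambda : forall j, lambda j != 0) :
  (matA k kappa beta == matAt k kappa lambda)%MS =
  [forall j : 'I_g.+1, (j != ord0) ==>
     (beta j == (lambda j)^-1 * expRcomb k kappa j)].
Proof.
pose e := weight k kappa beta lambda.
rewrite (eqmx_colsub_id (matA_colsub kappa beta hkg)
                        (matAt_colsub_unit hkg hkappa hlambda)).
rewrite matAt_eq_mul_matA //.
transitivity [forall j : 'I_g.+1, ~~ (j < k)%N ==>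
                [forall i : 'I_g.+1, (i < k)%N ==> (e i == e j)]].
  apply: eq_forallb => j; case: (ltnP j k) => //= ge_jk.
  rewrite -(forall_widen_ord (leqW hkg) (fun i => e i == e j)).
  by apply: eq_forallb => a; rewrite lagrange_eq_weight // -leqNgt.
rewrite (@forall_cross_eq _ _ (fun i : 'I_g.+1 => (i < k)%N) e ord0 ord_max) //;
  last by rewrite -leqNgt.
apply: eq_forallb => j; case: (eqVneq j ord0) => [-> | j0] /=; first exact: eqxx.
exact: weight_eq_weight0.
Qed.
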